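(* Let $-\infty\le a<b\le\infty$, let $\kappa,\varphi:(a,b)\to\mathbb C$ be measurable with $\kappa\in L^2(a,b)$ and $\mathbb 1_{(a,c)}\varphi\in L^2(a,b)$ for every $c\in(a,b)$. Choose $c_0:=a<c_1<c_2<\dots<b$ with $\|\mathbb 1_{(c_n,b)}\kappa\|^2=2^{-n}\|\kappa\|^2$, $n\in\mathbb N$, and set $J_n=(c_{n-1},c_n)$, $\omega_n=\|\mathbb 1_{J_n}\kappa\|\cdot\|\mathbb 1_{J_n}\varphi\|$. Then \[ \lim_{n\to\infty}\omega_n=0\iff\lim_{t\nearrow b}\|\mathbb 1_{(a,t)}\varphi\|\cdot\|\mathbb 1_{(t,b)}\kappa\|=0 . \]
   Context: Norms are $L^2(a,b)$-norms; $\mathbb 1_E$ is the indicator function of $E$. *)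

From HB Require Import structures.
From mathcomp Require Import all_boot all_order all_algebra.
From mathcomp Require Import all_classical all_reals all_analysis.
From mathcomp Require complex.
Set Implicit Arguments. Unset Strict Implicit. Unset Printing Implicit Defensive.
Import Order.TTheory GRing.Theory Num.Theory.
Import numFieldNormedType.Exports.
Local Open Scope classical_set_scope.
Local Open Scope ring_scope.

Notation cplx R := (complex.complex R).

Definition eitv {R : realType} (u v : \bar R) : set R :=
  [set x : R | ((u < x%:E) && (x%:E < v))%E].

Definition csq {R : realType} (z : cplx R) : R :=
  (complex.Re z) ^+ 2 + (complex.Im z) ^+ 2.

Definition cmeasurable {R : realType} (D : set R) (f : R -> cplx R) : Prop :=
  measurable_fun D (fun x => complex.Re (f x)) /\
  measurable_fun D (fun x => complex.Im (f x)).

Definition sqnorm {R : realType} (E : set R) (f : R -> cplx R) : \bar R :=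
  (\int[@lebesgue_measure R]_(x in E) (csq (f x))%:E)%E.

(* L^2 norm ||1_E f|| (for E with finite sqnorm) *)
Definition nrm {R : realType} (E : set R) (f : R -> cplx R) : R :=
  Num.sqrt (fine (sqnorm E f)).

Definition lim_left_zero {R : realType} (a b : \bar R) (g : R -> R) : Prop :=
  forall e : R, 0 < e -> exists t0 : R, (t0%:E < b)%E /\
    forall t : R, t0 < t -> (a < t%:E)%E -> (t%:E < b)%E -> `|g t| < e.

From HB Require Import structures.
From mathcomp Require Import all_boot all_order all_algebra.
From mathcomp Require Import all_classical all_reals all_analysis.
From mathcomp Require complex.
From mathcomp Require Import measurable_realfun ring lra.
Import Order.TTheory GRing.Theory Num.Theory.
Import numFieldNormedType.Exports.
Local Open Scope classical_set_scope.
Local Open Scope ring_scope.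

(* Write P t = ||1_(a,t) phi||^2 and k t = ||1_(t,b) kappa||^2.  Since
   ||1_(c_m,b) kappa||^2 halves at each step, the kappa-mass of J_(m+1) equals
   k c_(m+1), so omega_(m+1)^2 = k c_(m+1) * ||1_J_(m+1) phi||^2 <= (P k) c_(m+1):
   this gives the implication from right to left.  Conversely the values
   T_m = (P k) c_(m+1) obey T_(m+1) = T_m / 2 + omega_(m+2)^2, so T_m -> 0 when
   omega_m -> 0; for t in (c_m, c_(m+1)] monotonicity of P and k gives
   (P k) t <= P c_(m+1) * k c_m = 2 T_m, and beyond all the c_m we have k t = 0.
   Taking square roots does not affect convergence to 0. *)

Section sqnorm_eitv.
Context {R : realType}.
Implicit Types (u v w : \bar R) (f : R -> cplx R).

Definition sqnormr (E : set R) f : R := fine (sqnorm E f).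

Lemma nrmE (E : set R) f : nrm E f = Num.sqrt (sqnormr E f).
Proof. by []. Qed.

Lemma measurable_eitv u v : measurable (eitv u v).
Proof.
have -> : eitv u v = EFin @^-1` [set` Interval (BSide false u) (BSide true v)].
  by apply/seteqP; split => x /=; rewrite in_itv.
rewrite -[X in measurable X]setTI.
by apply: EFin_measurable => //; exact: emeasurable_itv.
Qed.

Lemma subset_eitv u v u' v' : (u' <= u)%E -> (v <= v')%E ->
  eitv u v `<=` eitv u' v'.
Proof.
move=> u'u vv' x /andP[ux xv]; apply/andP; split.
  exact: le_lt_trans u'u ux.
exact: lt_le_trans xv vv'.
Qed.

Lemma csq_ge0 (z : cplx R) : 0 <= csq z.
Proof. by rewrite /csq addr_ge0 // sqr_ge0. Qed.

Lemma sqnorm_ge0 (E : set R) f : (0 <= sqnorm E f)%E.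
Proof. by apply: integral_ge0 => x _; rewrite lee_fin csq_ge0. Qed.

Lemma sqnormr_ge0 (E : set R) f : 0 <= sqnormr E f.
Proof. exact/fine_ge0/sqnorm_ge0. Qed.

Lemma sqnormrE (E : set R) f :
  (sqnorm E f < +oo)%E -> sqnorm E f = (sqnormr E f)%:E.
Proof. by move=> fin; rewrite fineK // ge0_fin_numE // sqnorm_ge0. Qed.

Lemma measurable_csq {D : set R} {f} : cmeasurable D f ->
  measurable_fun D (fun x => (csq (f x))%:E).
Proof.
move=> [mRe mIm]; apply/measurable_EFinP.
by apply: measurable_funD; apply: measurable_funX.
Qed.

Section measurable_on_eitv.
Context {a b : \bar R} {f : R -> cplx R}.
Hypothesis mf : cmeasurable (eitv a b) f.

Let measurable_csq_sub {u v} : (a <= u)%E -> (v <= b)%E ->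
  measurable_fun (eitv u v) (fun x => (csq (f x))%:E).
Proof.
move=> au vb; apply: (measurable_funS (measurable_eitv a b) _ (measurable_csq mf)).
exact: subset_eitv.
Qed.

Lemma le_sqnorm_eitv {u v u' v'} : (a <= u')%E -> (u' <= u)%E -> (v <= v')%E ->
  (v' <= b)%E -> (sqnorm (eitv u v) f <= sqnorm (eitv u' v') f)%E.
Proof.
move=> au' u'u vv' v'b; rewrite /sqnorm; apply: ge0_subset_integral.
- exact: measurable_eitv.
- exact: measurable_eitv.
- exact: measurable_csq_sub.
- by move=> x _; rewrite lee_fin csq_ge0.
- exact: subset_eitv.
Qed.

Lemma le_sqnormr_eitv {u v u' v'} : (a <= u')%E -> (u' <= u)%E -> (v <= v')%E ->
  (v' <= b)%E -> (sqnorm (eitv u' v') f < +oo)%E ->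
  sqnormr (eitv u v) f <= sqnormr (eitv u' v') f.
Proof.
move=> au' u'u vv' v'b fin; have le := le_sqnorm_eitv au' u'u vv' v'b.
apply: fine_le => //; rewrite ge0_fin_numE ?sqnorm_ge0 //.
exact: le_lt_trans le fin.
Qed.

Lemma sqnorm_eitv_split {u} {v : R} {w} : (a <= u)%E -> (u < v%:E)%E ->
  (v%:E < w)%E -> (w <= b)%E ->
  sqnorm (eitv u w) f = (sqnorm (eitv u v%:E) f + sqnorm (eitv v%:E w) f)%E.
Proof.
move=> au uv vw wb.
have puncture : eitv u w `\ v = eitv u v%:E `|` eitv v%:E w.
  apply/seteqP; split => x; rewrite /eitv /=.
    move=> [/andP[ux xw] /eqP xv]; have [xlv|xgv] := ltP x v.
      by left; rewrite ux lte_fin xlv.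
    by right; rewrite xw andbT lte_fin lt_neqAle xgv eq_sym xv.
  case=> /andP[ux xv]; split; rewrite ?ux ?xv ?(lt_trans xv vw) ?(lt_trans uv ux) //.
  - by move=> xE; rewrite xE ltxx in xv.
  - by move=> xE; rewrite xE ltxx in ux.
have mD1 : measurable (eitv u w `\ v).
  by apply: measurableD => //; exact: measurable_eitv.
have mcsq1 : measurable_fun (eitv u w `\ v) (fun x => (csq (f x))%:E).
  exact: measurable_funS (measurable_eitv u w) (@subDsetl _ _ _)
    (measurable_csq_sub au wb).
rewrite /sqnorm -(integral_setD1 mD1 mcsq1) puncture.
rewrite ge0_integral_setU //.
- exact: measurable_eitv.
- exact: measurable_eitv.
- by rewrite -puncture.
- by move=> x _; rewrite lee_fin csq_ge0.
- apply/disj_setPS => x [/andP[_ xv] /andP[vx _]].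
  by have := lt_trans xv vx; rewrite ltxx.
Qed.

Lemma sqnormr_eitv_split {u} {v : R} {w} : (a <= u)%E -> (u < v%:E)%E ->
  (v%:E < w)%E -> (w <= b)%E -> (sqnorm (eitv u w) f < +oo)%E ->
  sqnormr (eitv u w) f = sqnormr (eitv u v%:E) f + sqnormr (eitv v%:E w) f.
Proof.
move=> au uv vw wb fin.
have fin_l : (sqnorm (eitv u v%:E) f < +oo)%E.
  exact: le_lt_trans (le_sqnorm_eitv au (lexx u) (ltW vw) wb) fin.
have fin_r : (sqnorm (eitv v%:E w) f < +oo)%E.
  exact: le_lt_trans (le_sqnorm_eitv au (ltW uv) (lexx w) wb) fin.
apply: EFin_inj; rewrite EFinD -!sqnormrE //; exact: sqnorm_eitv_split.
Qed.

End measurable_on_eitv.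
End sqnorm_eitv.

Section halving.
Context {R : realType}.

Lemma cvg_halvings (x : R) : (fun n => 2 ^- n * x) @ \oo --> 0.
Proof.
have -> : (fun n => 2 ^- n * x) = geometric x 2^-1.
  by apply/funext => n; rewrite /geometric /= exprVn mulrC.
by apply: cvg_geometric; rewrite gtr0_norm ?invf_lt1 ?ltr1n.
Qed.

Lemma cvg_halving_recursion (T q : R ^nat) :
  (forall n, T n.+1 = T n / 2 + q n) -> q @ \oo --> 0 -> T @ \oo --> 0.
Proof.
move=> Tq /cvgr0Pnorm_lt q0; apply/cvgr0Pnorm_lt => e e0.
have [N _ qN] := q0 (e / 4) (divr_gt0 e0 (ltr0n _ 4)).
have bound m : `|T (N + m)%N| <= e / 2 + 2 ^- m * `|T N|.
  elim: m => [|m IH]; first by rewrite addn0 expr0 invr1 mul1r lerDr; lra.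
  rewrite addnS Tq (le_trans (ler_normD _ _)) //.
  rewrite normrM (ger0_norm (_ : 0 <= 2^-1)) //.
  have := qN (N + m)%N (leq_addr _ _); rewrite exprS invfM -mulrA; lra.
have [M _ geoM] :=
  cvgr0_norm_lt _ (cvg_halvings `|T N|) (e / 2) (divr_gt0 e0 (ltr0n _ 2)).
exists (N + M)%N => // n /= NMn; have Nn := leq_trans (leq_addr M N) NMn.
have MnN : (M <= n - N)%N by rewrite leq_subRL // addnC.
rewrite -(subnKC Nn); apply: le_lt_trans (bound _) _.
have := geoM _ MnN; rewrite /= ger0_norm ?mulr_ge0 ?invr_ge0 ?exprn_ge0 //; lra.
Qed.

End halving.

Lemma nondecreasing_bracket {R : realDomainType} {r : nat -> R} {N : nat} {t : R} :
  {homo r : m n / (m <= n)%N >-> m <= n} -> r N < t ->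
  (forall m, r m < t) \/ exists2 m, (N <= m)%N & r m < t <= r m.+1.
Proof.
move=> r_nd rNt; have [[m tm]|] := pselect (exists m, t <= r m); last first.
  by move=> /forallNP above; left => m; rewrite ltNge; apply/negP/above.
right; have [[|m0] tm0 min] := ex_minnP (ex_intro (fun m => t <= r m) m tm).
  by have := lt_le_trans rNt (le_trans tm0 (r_nd _ _ (leq0n N))); rewrite ltxx.
exists m0; last by rewrite tm0 andbT ltNge; apply/negP => /min; rewrite ltnn.
rewrite leqNgt; apply/negP => m0N.
by have := lt_le_trans rNt (le_trans tm0 (r_nd _ _ m0N)); rewrite ltxx.
Qed.

Section dyadic_criterion.
(* Abstract form of the argument: [r m] plays c_(m+1), [P] and [k] the squared
   norms of phi on (a, t) and of kappa on (t, b), and [p m] the squared norm of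
   phi on J_(m+1). *)
Context {R : realType} {a b : \bar R} {P k : R -> R} {r p : nat -> R} {K : R}.
Hypotheses (r_gt : forall m, (a < (r m)%:E)%E) (r_lt : forall m, ((r m)%:E < b)%E).
Hypothesis r_incr : forall m, r m < r m.+1.
Hypotheses (P_ge0 : forall t, 0 <= P t) (k_ge0 : forall t, 0 <= k t).
Hypothesis p_ge0 : forall m, 0 <= p m.
Hypothesis P_le : forall s t, (a < s%:E)%E -> s <= t -> (t%:E < b)%E -> P s <= P t.
Hypothesis k_le : forall s t, (a < s%:E)%E -> s <= t -> (t%:E < b)%E -> k t <= k s.
Hypothesis k_r : forall m, k (r m) = 2 ^- m.+1 * K.
Hypothesis P_r0 : P (r 0) = p 0.
Hypothesis P_rS : forall m, P (r m.+1) = P (r m) + p m.+1.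

Let K_ge0 : 0 <= K.
Proof. by have := k_ge0 (r 0); rewrite k_r pmulr_rge0 // invr_gt0 exprn_gt0. Qed.

Let p_le_P m : p m <= P (r m).
Proof. by case: m => [|m]; rewrite ?P_r0 // P_rS lerDr. Qed.

Lemma dyadic_cvg_lim_left_zero : (fun m => 2 ^- m.+1 * K * p m) @ \oo --> 0 ->
  lim_left_zero a b (fun t => P t * k t).
Proof.
move=> W0; pose T m := 2 ^- m.+1 * K * P (r m).
have T0 : T @ \oo --> 0.
  apply: (@cvg_halving_recursion _ T (fun m => 2 ^- m.+2 * K * p m.+1)).
    by move=> m; rewrite /T P_rS !exprS !invfM; ring.
  by move: W0; rewrite -cvg_shiftS.
move=> e e0.
have [N _ TN] := cvgr0_norm_lt _ T0 (e / 2) (divr_gt0 e0 (ltr0n _ 2)).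
exists (r N); split => // t rNt ta tb; rewrite ger0_norm ?mulr_ge0 //.
have r_nd : {homo r : m n / (m <= n)%N >-> m <= n}.
  by apply/nondecreasing_seqP => m; exact: ltW.
have [beyond | [m Nm /andP[rmt trm]]] := nondecreasing_bracket r_nd rNt.
  have kt0 : k t <= 0.
    have := cvg_halvings K; rewrite -cvg_shiftS => halvK.
    apply: (ler_cvg_to (cvg_cst (k t)) halvK); exists 0%N => // m _ /=.
    by rewrite -k_r; apply: k_le; rewrite ?ltW.
  by rewrite (_ : k t = 0) ?mulr0 //; apply/le_anti; rewrite kt0 k_ge0.
have := TN m.+1 (leqW Nm); rewrite /= ger0_norm ?mulr_ge0 // => Tm.
suff : P t * k t <= 2 * T m.+1 by lra.
have -> : 2 * T m.+1 = P (r m.+1) * k (r m) by rewrite /T k_r exprS invfM; field.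
by apply: ler_pM => //; [exact: P_le | apply: k_le; rewrite ?ltW].
Qed.

Lemma lim_left_zero_dyadic_cvg : lim_left_zero a b (fun t => P t * k t) ->
  (fun m => 2 ^- m.+1 * K * p m) @ \oo --> 0.
Proof.
move=> F0; apply/cvgr0Pnorm_lt => e e0; have [t0 [t0b Ft0]] := F0 e e0.
have := cvg_halvings (K * P t0); rewrite -cvg_shiftS => halv.
have [M _ HM] := cvgr0_norm_lt _ halv e e0.
exists M => // m /= Mm; rewrite ger0_norm ?mulr_ge0 //.
apply: le_lt_trans (_ : _ <= P (r m) * k (r m)) _.
  by rewrite k_r mulrC; apply: ler_wpM2r; rewrite ?mulr_ge0.
have [rt0 | t0r] := leP (r m) t0.
  have := HM _ Mm; rewrite /= ger0_norm ?mulr_ge0 //; apply: le_lt_trans.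
  rewrite k_r mulrC -mulrA; do 2 apply: ler_wpM2l => //; exact: P_le.
by have := Ft0 (r m) t0r (r_gt m) (r_lt m); apply: le_lt_trans; exact: ler_norm.
Qed.

Lemma dyadic_criterion : (fun m => 2 ^- m.+1 * K * p m) @ \oo --> 0 <->
  lim_left_zero a b (fun t => P t * k t).
Proof.
by split; [exact: dyadic_cvg_lim_left_zero | exact: lim_left_zero_dyadic_cvg].
Qed.

End dyadic_criterion.

Section dyadic_partition.
Variables (R : realType) (a b : \bar R) (kappa phi : R -> cplx R) (c : nat -> \bar R).
Hypotheses (mkappa : cmeasurable (eitv a b) kappa) (mphi : cmeasurable (eitv a b) phi).
Hypothesis kappa_fin : (sqnorm (eitv a b) kappa < +oo)%E.
Hypothesis phi_fin : forall t : R, (a < t%:E)%E -> (t%:E < b)%E ->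
  (sqnorm (eitv a t%:E) phi < +oo)%E.
Hypotheses (c0 : c 0%N = a) (c_incr : forall n, (c n < c n.+1)%E).
Hypothesis c_lt : forall n, (c n < b)%E.
Hypothesis c_tail : forall n,
  sqnorm (eitv (c n) b) kappa = ((2 ^- n : R)%:E * sqnorm (eitv a b) kappa)%E.

Let K := sqnormr (eitv a b) kappa.
Let r m := fine (c m.+1).

Let a_le_c n : (a <= c n)%E.
Proof. by elim: n => [|n IH]; [rewrite c0 | exact: le_trans IH (ltW (c_incr n))]. Qed.

Let c_fin m : c m.+1 = (r m)%:E.
Proof.
have ac : (a < c m.+1)%E := le_lt_trans (a_le_c m) (c_incr m).
rewrite /r fineK // fin_numElt (le_lt_trans (leNye a) ac).
exact: lt_le_trans (c_lt _) (leey b).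
Qed.

Let kappa_fin_sub {u v} : (a <= u)%E -> (v <= b)%E ->
  (sqnorm (eitv u v) kappa < +oo)%E.
Proof.
move=> au vb.
exact: le_lt_trans (le_sqnorm_eitv mkappa (lexx a) au vb (lexx b)) kappa_fin.
Qed.

Let kappa_tail n : sqnormr (eitv (c n) b) kappa = 2 ^- n * K.
Proof. by rewrite /sqnormr c_tail sqnormrE. Qed.

Let c_lt_r m : (c m < (r m)%:E)%E.
Proof. by rewrite -c_fin. Qed.

Let r_lt_b m : ((r m)%:E < b)%E.
Proof. by rewrite -c_fin. Qed.

Let kappa_block m : sqnormr (eitv (c m) (c m.+1)) kappa = 2 ^- m.+1 * K.
Proof.
have := sqnormr_eitv_split mkappa (a_le_c m) (c_lt_r m) (r_lt_b m) (lexx b)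
  (kappa_fin_sub (a_le_c m) (lexx b)).
rewrite -c_fin !kappa_tail exprS invfM -mulrA; lra.
Qed.

Let a_lt_r m : (a < (r m)%:E)%E.
Proof. exact: le_lt_trans (a_le_c m) (c_lt_r m). Qed.

Let r_incr m : r m < r m.+1.
Proof. by rewrite -lte_fin -!c_fin. Qed.

Let phi_head_rS m : sqnormr (eitv a (r m.+1)%:E) phi =
  sqnormr (eitv a (r m)%:E) phi + sqnormr (eitv (c m.+1) (c m.+2)) phi.
Proof.
rewrite (c_fin m) (c_fin m.+1).
have r_r : ((r m)%:E < (r m.+1)%:E)%E by rewrite lte_fin.
exact: (sqnormr_eitv_split mphi (lexx a) (a_lt_r m) r_r (ltW (r_lt_b m.+1))
  (phi_fin _ (a_lt_r m.+1) (r_lt_b m.+1))).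
Qed.

Lemma dyadic_partition_criterion :
  (fun m => sqnormr (eitv (c m) (c m.+1)) kappa * sqnormr (eitv (c m) (c m.+1)) phi)
    @ \oo --> 0 <->
  lim_left_zero a b (fun t => sqnormr (eitv a t%:E) phi * sqnormr (eitv t%:E b) kappa).
Proof.
under eq_fun do rewrite kappa_block.
apply: (dyadic_criterion (r := r)) => //.
- by move=> t; exact: sqnormr_ge0.
- by move=> t; exact: sqnormr_ge0.
- by move=> m; exact: sqnormr_ge0.
- move=> s t sa st tb /=; rewrite -lee_fin in st.
  exact: (le_sqnormr_eitv mphi (lexx a) (lexx a) st (ltW tb)
    (phi_fin _ (lt_le_trans sa st) tb)).
- move=> s t sa st tb /=; rewrite -lee_fin in st.
  exact: (le_sqnormr_eitv mkappa (ltW sa) st (lexx b) (lexx b)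
    (kappa_fin_sub (ltW sa) (lexx b))).
- by move=> m; rewrite -c_fin kappa_tail.
- by rewrite -c_fin c0.
Qed.

End dyadic_partition.

Lemma cvg0_sqrt {R : realType} {T : Type} {F : set_system T} {FF : Filter F}
    (u : T -> R) : (forall t, 0 <= u t) ->
  (Num.sqrt \o u @ F --> 0) <-> (u @ F --> 0).
Proof.
move=> u_ge0; split => [su0|u0].
  have -> : u = (fun t => Num.sqrt (u t) * Num.sqrt (u t)).
    by apply/funext => t; rewrite -expr2 sqr_sqrtr.
  by rewrite -(mulr0 0); exact: cvgM.
by rewrite -sqrtr0; apply: cvg_comp u0 _; exact: sqrt_continuous.
Qed.

Lemma lim_left_zero_sqrt {R : realType} (a b : \bar R) (g : R -> R) :
  (forall t, 0 <= g t) ->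
  lim_left_zero a b (fun t => Num.sqrt (g t)) <-> lim_left_zero a b g.
Proof.
move=> g_ge0; split => g0 e e0.
  have [t0 [t0b gt0]] := g0 (Num.sqrt e) ltac:(by rewrite sqrtr_gt0).
  exists t0; split => // t t0t ta tb; have := gt0 t t0t ta tb.
  by rewrite !ger0_norm ?sqrtr_ge0 // ltr_sqrt.
have [t0 [t0b gt0]] := g0 (e ^+ 2) (exprn_gt0 _ e0).
exists t0; split => // t t0t ta tb; have := gt0 t t0t ta tb.
rewrite !ger0_norm ?sqrtr_ge0 // => gte.
by rewrite -(ger0_norm (ltW e0)) -sqrtr_sqr ltr_sqrt ?exprn_gt0.
Qed.

Theorem lemma3p2 (R : realType) (a b : \bar R) (kappa phi : R -> cplx R)
  (c : nat -> \bar R) :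
  (a < b)%E ->
  cmeasurable (eitv a b) kappa ->
  cmeasurable (eitv a b) phi ->
  (sqnorm (eitv a b) kappa < +oo)%E ->
  (forall c' : R, (a < c'%:E)%E -> (c'%:E < b)%E ->
     (sqnorm (eitv a c'%:E) phi < +oo)%E) ->
  c 0%N = a ->
  (forall n, (c n < c n.+1)%E) ->
  (forall n, (c n < b)%E) ->
  (forall n, sqnorm (eitv (c n) b) kappa
             = ((2 ^- n : R)%:E * sqnorm (eitv a b) kappa)%E) ->
  let omega := fun n : nat =>
    nrm (eitv (c n.-1) (c n)) kappa * nrm (eitv (c n.-1) (c n)) phi in
  (omega @ \oo --> (0 : R)) <->
  lim_left_zero a b
    (fun t : R => nrm (eitv a t%:E) phi * nrm (eitv t%:E b) kappa).
Proof.
move=> _ mkappa mphi kappa_fin phi_fin c0 c_incr c_lt c_tail omega.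
have sqrt_prod (E F : set R) f g :
    nrm E f * nrm F g = Num.sqrt (sqnormr E f * sqnormr F g).
  by rewrite !nrmE sqrtrM // sqnormr_ge0.
rewrite -cvg_shiftS /= /omega; under eq_fun do rewrite sqrt_prod /=.
under [X in lim_left_zero _ _ X]eq_fun do rewrite sqrt_prod.
rewrite cvg0_sqrt ?lim_left_zero_sqrt => [|t|m]; rewrite ?mulr_ge0 ?sqnormr_ge0 //.
exact: dyadic_partition_criterion.
Qed.
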